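(* Let $N\ge1$, $v>0$, $\varepsilon>0$, $L_1>0$ and $L_2=1$. Consider the continuous-time Markov chain $(N(t),W(t))$ on $\{0,\dots,N\}\times\{A,I\}$ with transition rates $(k,A)\to(k+1,A)$ at rate $(N-k)v$, $(k,A)\to(k-1,A)$ at rate $k$, $(k,I)\to(k+1,I)$ at rate $\varepsilon(N-k)v$, $(k,I)\to(k-1,I)$ at rate $k$, $(k,I)\to(k,A)$ at rate $L_2$, and $(k,A)\to(k,I)$ at rate $L_1\varepsilon^k$. Then the stationary marginal distribution of $N(t)$ is $$\bar\pi(k)=\frac{\binom Nk(\frac{v}{1+v})^k(\frac{1}{1+v})^{N-k}}{1+(\frac{1+\varepsilon v}{1+v})^NL_1}+\frac{\binom Nk(\frac{\varepsilon v}{1+\varepsilon v})^k(\frac{1}{1+\varepsilon v})^{N-k}}{1+(\frac{1+v}{1+\varepsilon v})^NL_1^{-1}},\qquad k=0,\dots,N,$$ a mixture of the binomial distributions $\mathcal B(N,\frac{v}{1+v})$ and $\mathcal B(N,\frac{\varepsilon v}{1+\varepsilon v})$.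
   Context: This is a model of allosteric multisite phosphorylation: $N(t)$ is the number of phosphorylated sites among $N$, $W(t)\in\{A,I\}$ is the active/inactive state of the protein, $v$ is the kinase/ligand concentration. *)

(* States of the chain: (k, w) with k : 'I_N.+1 and
   w : bool, where true = A (active), false = I (inactive). *)
From HB Require Import structures.
From mathcomp Require Import all_boot all_order all_algebra.
Set Implicit Arguments. Unset Strict Implicit. Unset Printing Implicit Defensive.
Import Order.TTheory GRing.Theory Num.Theory.
Local Open Scope ring_scope.

Definition state (N : nat) : finType := ('I_N.+1 * bool)%type.

Definition rate (R : realFieldType) (N : nat) (v eps L1 : R)
    (x y : state N) : R :=
  let: (i, a) := x in let: (j, b) := y in
  if a == b then
    if val j == (val i).+1 then (N - val i)%:R * (if a then v else eps * v)
    else if val i == (val j).+1 then (val i)%:R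
    else 0
  else if val i == val j then (if a then L1 * eps ^+ val i else 1)
  else 0.

Definition stationary (R : realFieldType) (N : nat) (v eps L1 : R)
    (pi : state N -> R) : Prop :=
  (forall x, 0 <= pi x) /\ (\sum_x pi x = 1) /\
  (forall y, \sum_(x | x != y) pi x * rate v eps L1 x y
             = pi y * \sum_(x | x != y) rate v eps L1 y x).

Definition pibar (R : realFieldType) (N : nat) (v eps L1 : R) (k : nat) : R :=
  'C(N, k)%:R * (v / (1 + v)) ^+ k * (1 / (1 + v)) ^+ (N - k)
    / (1 + ((1 + eps * v) / (1 + v)) ^+ N * L1)
  + 'C(N, k)%:R * (eps * v / (1 + eps * v)) ^+ k * (1 / (1 + eps * v)) ^+ (N - k)
    / (1 + ((1 + v) / (1 + eps * v)) ^+ N * L1^-1).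

(** The chain is reversible: the weight
      mu (k, A) = C(N,k) v^k,   mu (k, I) = L1 C(N,k) (eps v)^k
    satisfies detailed balance (in particular [L1 eps^k] is exactly the
    ratio mu (k, I) / mu (k, A)), so mu, normalised by its total mass
    (1 + v)^N + L1 (1 + eps v)^N, is stationary.  Conversely, for any
    stationary pi the ratio pi / mu is harmonic for the chain, so by the
    maximum principle it is constant along every positive-rate transition;
    the chain is irreducible, hence pi is proportional to mu.  Summing
    mu (k, A) + mu (k, I) and dividing by the total mass gives pibar. *)

From HB Require Import structures.
From mathcomp Require Import all_boot all_order all_algebra.
From mathcomp Require Import ring.
Import Order.TTheory GRing.Theory Num.Theory.
Set Implicit Arguments. Unset Strict Implicit. Unset Printing Implicit Defensive.
Local Open Scope ring_scope.

Section ReversibleChain.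

Variables (R : realFieldType) (T : finType) (q : T -> T -> R) (mu : T -> R).
Hypothesis q_ge0 : forall x y, 0 <= q x y.
Hypothesis mu_gt0 : forall x, 0 < mu x.
Hypothesis q_reversible : forall x y, mu x * q x y = mu y * q y x.

Definition balanced (pi : T -> R) : Prop :=
  forall y, \sum_(x | x != y) pi x * q x y = pi y * \sum_(x | x != y) q y x.

Definition positive_rate : rel T := [rel x y | q x y != 0].

Lemma balanced_scaled_weight (c : R) : balanced (fun x => mu x * c).
Proof.
move=> y; rewrite mulr_sumr; apply: eq_bigr => x _.
by rewrite mulrAC q_reversible mulrAC.
Qed.

Lemma balanced_harmonic (pi : T -> R) : balanced pi ->
  forall y, \sum_(x | x != y) q y x * (pi y / mu y - pi x / mu x) = 0.
Proof.
move=> bal y; have mu_neq0 z : mu z != 0 by rewrite gt_eqF.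
have flux : \sum_(x | x != y) pi x / mu x * q y x
    = pi y / mu y * \sum_(x | x != y) q y x.
  apply: (mulfI (mu_neq0 y)); rewrite [RHS]mulrA [mu y * (_ / _)]mulrC divfK // -bal.
  rewrite mulr_sumr; apply: eq_bigr => x _.
  by rewrite mulrCA -q_reversible mulrA divfK.
rewrite (eq_bigr (fun x => pi y / mu y * q y x - pi x / mu x * q y x)).
  by rewrite big_split /= sumrN -mulr_sumr flux subrr.
by move=> x _; rewrite mulrBr mulrC [q y x * _]mulrC.
Qed.

Lemma balanced_max_step (pi : T -> R) (M : R) : balanced pi ->
  (forall z, pi z / mu z <= M) ->
  forall y x, positive_rate y x -> pi y / mu y = M -> pi x / mu x = M.
Proof.
move=> bal le_M y x /= qyx_neq0 hyM.
have [-> //|x_neq_y] := eqVneq x y.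
have := balanced_harmonic bal y; rewrite hyM => /psumr_eq0P vanish.
have terms_ge0 z : z != y -> 0 <= q y z * (M - pi z / mu z).
  by move=> _; rewrite mulr_ge0 ?subr_ge0.
have /eqP := vanish terms_ge0 x x_neq_y.
by rewrite mulf_eq0 (negbTE qyx_neq0) subr_eq0 => /eqP <-.
Qed.

Lemma positive_rate_sym : symmetric positive_rate.
Proof.
have weighted_eq0 x y : (mu x * q x y == 0) = (q x y == 0).
  by rewrite mulf_eq0 gt_eqF.
by move=> x y; rewrite /positive_rate /= -weighted_eq0 q_reversible weighted_eq0.
Qed.

Lemma balanced_proportional (pi : T -> R) (x0 : T) : balanced pi ->
  (forall x y, connect positive_rate x y) -> exists c, forall x, pi x = c * mu x.
Proof.
move=> bal irreducible.
have [M le_M [m hmM]] :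
    exists2 M, forall z, pi z / mu z <= M & exists m, pi m / mu m = M.
  have [m _ le_m] := @arg_maxP _ _ _ x0 xpredT (fun z => pi z / mu z) isT.
  by exists (pi m / mu m) => [z|]; [exact: le_m | exists m].
exists M => x; suff <- : pi x / mu x = M by rewrite divfK // gt_eqF.
have /connectP[p m_p ->] := irreducible m x.
elim: p m m_p hmM => [|y p IH] z //= /andP[zy y_p] hzM.
exact: IH y_p (balanced_max_step bal le_M zy hzM).
Qed.

End ReversibleChain.

Section AllostericChain.

Variables (R : realFieldType) (N : nat) (v eps L1 : R).
Hypotheses (v_gt0 : 0 < v) (eps_gt0 : 0 < eps) (L1_gt0 : 0 < L1).

Definition weight (x : state N) : R :=
  let: (i, a) := x in
  (if a then 1 else L1) * ('C(N, val i)%:R * (if a then v else eps * v) ^+ val i).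

Lemma rate_ge0 (x y : state N) : 0 <= rate v eps L1 x y.
Proof.
move: x y => [i [|]] [j [|]]; rewrite /rate /=; repeat case: ifP => _;
by rewrite ?mulr_ge0 ?exprn_ge0 ?ler0n ?ler01 ?(ltW v_gt0) ?(ltW eps_gt0) ?(ltW L1_gt0).
Qed.

Lemma weight_gt0 (x : state N) : 0 < weight x.
Proof.
case: x => i a; have C_gt0 : 0 < 'C(N, i)%:R :> R.
  by rewrite ltr0n bin_gt0 -ltnS.
by case: a; rewrite /= ?mul1r ?mulr_gt0 ?exprn_gt0 ?mulr_gt0.
Qed.

Lemma binomial_step (i : nat) (c : R) :
  'C(N, i)%:R * c ^+ i * ((N - i)%:R * c) = 'C(N, i.+1)%:R * c ^+ i.+1 * i.+1%:R.
Proof.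
have := congr1 (fun n => n%:R : R) (mul_bin_left N i); rewrite /= !natrM => binE.
rewrite exprS; transitivity ((N - i)%:R * 'C(N, i)%:R * (c * c ^+ i)); first by ring.
by rewrite -binE; ring.
Qed.

Lemma rate_reversible (x y : state N) :
  weight x * rate v eps L1 x y = weight y * rate v eps L1 y x.
Proof.
move: x y => [i a] [j b]; rewrite /rate /weight /=.
move: (val i) (val j) => {}i {}j; rewrite [b == a]eq_sym.
have [<-{b}|a_neq_b] := eqVneq a b; last first.
  have [<-{j}|_] := eqVneq i j; last by rewrite !mulr0.
  by case: a b a_neq_b => [] [] //= _; rewrite exprMn; ring.
set c := if a then v else eps * v.
have [->{j}|_] := eqVneq j i.+1.
  by rewrite ltn_eqF // -[LHS]mulrA binomial_step mulrA.
have [->{i}|_] := eqVneq i j.+1; last by rewrite !mulr0.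
by rewrite -[RHS]mulrA binomial_step !mulrA.
Qed.

Lemma rate_down_neq0 (i j : 'I_N.+1) (b : bool) :
  val i = (val j).+1 -> rate v eps L1 (i, b) (j, b) != 0.
Proof. by move=> ij; rewrite /rate eqxx ij ltn_eqF // eqxx pnatr_eq0. Qed.

Lemma rate_activate_neq0 (i : 'I_N.+1) : rate v eps L1 (i, false) (i, true) != 0.
Proof. by rewrite /rate /= eqxx oner_neq0. Qed.

Lemma connect_to_origin (x : state N) :
  connect (positive_rate (rate v eps L1)) x (ord0, true).
Proof.
case: x => i b; move: {2}(val i) (erefl (val i)) => n; elim: n i => [|n IH] i vi.
  have -> : i = ord0 by apply: val_inj.
  by case: b; [exact: connect0 | apply: connect1; exact: rate_activate_neq0].
have ltnN : (n < N.+1)%N by apply: ltnW; rewrite -vi ltn_ord.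
apply: connect_trans (IH (Ordinal ltnN) erefl).
by apply/connect1/rate_down_neq0.
Qed.

Lemma rate_irreducible (x y : state N) :
  connect (positive_rate (rate v eps L1)) x y.
Proof.
have sym := sym_connect_sym (positive_rate_sym weight_gt0 rate_reversible).
by rewrite (connect_trans (connect_to_origin x)) // sym connect_to_origin.
Qed.

Lemma total_weight :
  \sum_(x : state N) weight x = (1 + v) ^+ N + L1 * (1 + eps * v) ^+ N.
Proof.
rewrite (eq_bigr (fun p : state N => weight (p.1, p.2))); last by case.
rewrite -(pair_bigA _ (fun i b => weight (i, b))) /=.
rewrite (eq_bigr (fun i : 'I_N.+1 =>
  'C(N, i)%:R * v ^+ i + L1 * ('C(N, i)%:R * (eps * v) ^+ i))); last first.
  by move=> i _; rewrite big_bool /= mul1r.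
rewrite big_split /= -mulr_sumr !(addrC 1) !exprD1n.
by congr (_ + L1 * _); apply: eq_bigr => i _; rewrite mulr_natl.
Qed.

Lemma total_weight_gt0 : 0 < \sum_(x : state N) weight x.
Proof. by rewrite total_weight addr_gt0 ?mulr_gt0 ?exprn_gt0 ?addr_gt0 ?mulr_gt0. Qed.

Lemma weight_stationary :
  stationary v eps L1 (fun x => weight x / \sum_(y : state N) weight y).
Proof.
split; [|split].
- by move=> x; rewrite divr_ge0 ?ltW ?weight_gt0 ?total_weight_gt0.
- by rewrite -mulr_suml mulfV // gt_eqF // total_weight_gt0.
- exact: balanced_scaled_weight rate_reversible _.
Qed.

Lemma stationary_weight (pi : state N -> R) : stationary v eps L1 pi ->
  forall x, pi x = weight x / \sum_(y : state N) weight y.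
Proof.
move=> [_ [sum_pi bal]].
have [c pi_c] := balanced_proportional rate_ge0 weight_gt0 rate_reversible
  (ord0, true) bal rate_irreducible.
have cE : c = (\sum_(y : state N) weight y)^-1.
  apply: (mulIf (lt0r_neq0 total_weight_gt0)); rewrite mulVf ?gt_eqF ?total_weight_gt0 //.
  by rewrite mulr_sumr -sum_pi; apply: eq_bigr => x _; rewrite pi_c.
by move=> x; rewrite pi_c cE mulrC.
Qed.

Lemma expr_div_complement (n k : nat) (a b : R) : (k <= n)%N -> b != 0 ->
  (a / b) ^+ k * (1 / b) ^+ (n - k) = a ^+ k / b ^+ n.
Proof.
move=> le_kn b_neq0; rewrite -{2}(subnKC le_kn) exprD !expr_div_n expr1n.
by field; rewrite ?expf_neq0.
Qed.

Lemma pibar_weightE (k : 'I_N.+1) :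
  pibar N v eps L1 k = (weight (k, true) + weight (k, false))
                       / ((1 + v) ^+ N + L1 * (1 + eps * v) ^+ N).
Proof.
have le_kN : (k <= N)%N by rewrite -ltnS.
rewrite /pibar -!(mulrA 'C(N, k)%:R) !expr_div_complement ?gt_eqF
  ?addr_gt0 ?mulr_gt0 // !expr_div_n /weight mul1r.
set X := (1 + v) ^+ N; set Y := (1 + eps * v) ^+ N.
have X_gt0 : 0 < X by rewrite exprn_gt0 // addr_gt0.
have Y_gt0 : 0 < Y by rewrite exprn_gt0 // addr_gt0 // mulr_gt0.
have XY_neq0 : X + L1 * Y != 0 by rewrite gt_eqF // addr_gt0 // mulr_gt0.
have YX_neq0 : Y * L1 + X != 0 by rewrite addrC mulrC.
by field; rewrite XY_neq0 !gt_eqF.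
Qed.

End AllostericChain.

Unset Implicit Arguments.

Theorem proposition1 (R : realFieldType) (N : nat) (v eps L1 : R)
    (hN : (1 <= N)%N) (hv : 0 < v) (heps : 0 < eps) (hL1 : 0 < L1) :
  (exists pi : state N -> R, stationary v eps L1 pi) /\
  (forall pi : state N -> R, stationary v eps L1 pi ->
     forall k : 'I_N.+1, pi (k, true) + pi (k, false) = pibar N v eps L1 k).
Proof.
split; first by eexists; exact: weight_stationary.
move=> pi pi_stat k.
rewrite !(stationary_weight hv heps hL1 pi_stat) -mulrDl.
by rewrite pibar_weightE // total_weight.
Qed.
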